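(* Let $(M,d)$ be a complete pointed metric space and let $\mu,\nu$ be positive Radon measures on $\beta\widetilde{M}$. Then $\mu\preccurlyeq\nu$ and $\nu\preccurlyeq\mu$ if and only if $q_\sharp\mu=q_\sharp\nu$.
   Context: $\widetilde{M}=\{(x,y)\in M\times M:x\ne y\}$, $\beta\widetilde{M}$ its Stone–Čech compactification; Radon measures identified with $C(\beta\widetilde{M})^*$. $G$ is the set of $g\in C(\beta\widetilde{M})$ with $d(x,y)g(x,y)\le d(x,u)g(x,u)+d(u,y)g(u,y)$ for all distinct $x,u,y\in M$; $\mu\preccurlyeq\nu$ iff $\int g\,d\mu\le\int g\,d\nu$ for all $g\in G$. Define $\zeta\sim\omega$ on $\beta\widetilde{M}$ iff $g(\zeta)=g(\omega)$ for all $g\in G$; $\widetilde{M}^G=\beta\widetilde{M}/\!\sim$ with the quotient topology (compact Hausdorff), $q:\beta\widetilde{M}\to\widetilde{M}^G$ the quotient map, and $q_\sharp$ the pushforward of measures. Throughout, $M$ has at least three distinct points. *)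

From HB Require Import structures.
From mathcomp Require Import all_boot all_order all_algebra generic_quotient.
From mathcomp Require Import all_classical all_reals all_analysis.

Set Implicit Arguments.
Unset Strict Implicit.
Unset Printing Implicit Defensive.

Import Order.TTheory GRing.Theory Num.Theory numFieldNormedType.Exports.
Local Open Scope classical_set_scope.
Local Open Scope ring_scope.
Local Open Scope quotient_scope.

Definition complete_space (T : uniformType) : Prop :=
  forall F : set_system T, ProperFilter F -> cauchy F -> exists x : T, F --> x.

Definition offdiag (M : Type) : set (M * M) := [set p | p.1 <> p.2].
Definition Mtilde (M : topologicalType) : topologicalType :=
  set_type (@offdiag M).

Definition is_stone_cech (X B : topologicalType) (i : X -> B) : Prop :=
  [/\ compact [set: B] /\ hausdorff_space B, continuous i,
      injective i
      /\ (forall U : set X, open U -> exists V : set B, open V /\ U = i @^-1` V),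
      dense (range i)
    & forall (K : topologicalType) (f : X -> K),
        compact [set: K] -> hausdorff_space K -> continuous f ->
        exists F : B -> K, continuous F /\ F \o i = f].

(** Positive Radon measures on a compact Hausdorff space B, identified
    (Riesz) with positive linear functionals on C(B) = continuous real
    functions on B; [L f] is [\int f dmu].  Only values on continuous
    functions are meaningful. *)
Definition positive_radon (R : realType) (B : topologicalType)
    (L : (B -> R) -> R) : Prop :=
  [/\ forall f g : B -> R, continuous f -> continuous g ->
        L (fun x => f x + g x) = L f + L g,
      forall (a : R) (f : B -> R), continuous f ->
        L (fun x => a * f x) = a * L f
    & forall f : B -> R, continuous f -> (forall x, 0 <= f x) -> 0 <= L f].

Section G_def.
Variables (R : realType) (M : metricType R) (B : topologicalType)
          (i : Mtilde M -> B).

Local Notation d := (@mdist R M).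

(** The cone G of C(beta M~): continuous g with
    d(x,y) g(x,y) <= d(x,u) g(x,u) + d(u,y) g(u,y) for distinct x,u,y.
    Here p = (x,y), q = (x,u), r = (u,y). *)
Definition Gset : set (B -> R) :=
  [set g | continuous g /\
     forall p q r : Mtilde M,
       (set_val p).1 = (set_val q).1 -> (set_val q).2 = (set_val r).1 ->
       (set_val r).2 = (set_val p).2 ->
       d (set_val p).1 (set_val p).2 * g (i p)
       <= d (set_val q).1 (set_val q).2 * g (i q)
        + d (set_val r).1 (set_val r).2 * g (i r)].

Definition Gle (mu nu : (B -> R) -> R) : Prop :=
  forall g, Gset g -> mu g <= nu g.

Definition Grel : rel B := fun z w => `[< forall g, Gset g -> g z = g w >].

Lemma Grel_refl : reflexive Grel.
Proof. by move=> z; apply/asboolP. Qed.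

Lemma Grel_sym : symmetric Grel.
Proof.
by move=> z w; apply/asboolP/asboolP => H g Gg; rewrite H.
Qed.

Lemma Grel_trans : transitive Grel.
Proof.
by move=> w z u /asboolP H1 /asboolP H2; apply/asboolP => g Gg;
  rewrite H1 // H2.
Qed.

Canonical Grel_equiv := EquivRel Grel Grel_refl Grel_sym Grel_trans.

Definition MtildeG : topologicalType :=
  quotient_topology {eq_quot Grel_equiv}.
Definition qmap : B -> MtildeG := \pi_MtildeG.

Definition qpush (mu : (B -> R) -> R) : (MtildeG -> R) -> R :=
  fun phi => mu (phi \o qmap).

End G_def.

Arguments qpush [R M B] i mu _.
Arguments MtildeG [R M B] i.
Arguments qmap [R M B] i.

Definition radon_eq (R : realType) (T : topologicalType)
    (mu nu : (T -> R) -> R) : Prop :=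
  forall phi : T -> R, continuous phi -> mu phi = nu phi.

(** G is a convex cone of continuous functions on the compact
    space βM~ that contains the nonnegative constants and is closed under
    pointwise max, so the differences G - G form a vector lattice containing
    the constants.  Its members separate exactly the points that ~ does not
    identify, hence every continuous function constant on ~-classes, i.e.
    every φ ∘ q, can be interpolated by G - G at any two points; by the
    lattice (Kakutani–Krein) form of the Stone–Weierstrass theorem it is a
    uniform limit of elements of G - G.  Positive functionals are continuous
    for the sup norm, so μ and ν, which agree on G exactly when μ ≼ ν ≼ μ,
    agree on every φ ∘ q.  Conversely each g ∈ G factors as (g ∘ repr) ∘ q
    with g ∘ repr continuous on the quotient. *)

From HB Require Import structures.
From mathcomp Require Import all_boot all_order all_algebra generic_quotient.
From mathcomp Require Import all_classical all_reals all_analysis.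
From mathcomp Require Import ring.

Set Implicit Arguments.
Unset Strict Implicit.
Unset Printing Implicit Defensive.

Import Order.TTheory GRing.Theory Num.Theory numFieldNormedType.Exports.

Local Open Scope classical_set_scope.
Local Open Scope ring_scope.

Section RealContinuous.
Variables (R : realType) (T : topologicalType).
Implicit Types (f g : T -> R) (a : R).

Lemma continuous_add f g : continuous f -> continuous g ->
  continuous (fun x => f x + g x).
Proof. by move=> cf cg x; exact: (@continuousD _ R^o _ f g x (cf x) (cg x)). Qed.

Lemma continuous_sub f g : continuous f -> continuous g ->
  continuous (fun x => f x - g x).
Proof. by move=> cf cg x; exact: (@continuousB _ R^o _ f g x (cf x) (cg x)). Qed.

Lemma continuous_addr f a : continuous f -> continuous (fun x => f x + a).
Proof. by move=> cf; apply: continuous_add => //; exact: cst_continuous. Qed.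

Lemma continuous_scale a f : continuous f -> continuous (fun x => a * f x).
Proof.
move=> cf x.
exact: (@continuousM _ _ (fun=> a) f x (@cst_continuous _ R^o a x) (cf x)).
Qed.

End RealContinuous.

Section LatticeApproximation.
Variables (R : realType) (T : topologicalType).
Hypothesis compactT : compact [set: T].

(* Compactness is applied to the filter of "eventually larger" members of P,
   which is directed because P is closed under max. *)
Lemma compact_max_closed_gt (P : set (T -> R)) (f : T -> R) :
  continuous f -> (forall h, P h -> continuous h) ->
  (forall h k, P h -> P k -> P (h \max k)) -> P !=set0 ->
  (forall x, exists2 h, P h & f x < h x) ->
  exists2 h, P h & forall x, f x < h x.
Proof.
move=> cf cP Pmax [h0 Ph0] ptwise.
pose above k := [set h | P h /\ forall x, k x <= h x].
have above_filter : Filter (filter_from P above).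
  apply: filter_from_filter; first by exists h0.
  move=> k1 k2 Pk1 Pk2; exists (k1 \max k2); first exact: Pmax.
  by move=> h [Ph kh]; split; split=> // x;
    apply: le_trans (kh x); rewrite le_max lexx ?orbT.
have [k Pk fk] : \forall h \near filter_from P above,
    [set: T] `<=` [set x | f x < h x].
  apply: ((compact_near_coveringP _).1 compactT _ _ (fun h x => f x < h x)
    above_filter) => x _.
  have [hx Phx fhx] := ptwise x.
  have near_x : \forall y \near x, 0 < hx y - f y.
    apply: (@cvgr_gt _ _ _ _ (fun y => hx y - f y) (hx x - f x)).
      exact: continuous_sub (cP _ Phx) cf x.
    by rewrite subr_gt0.
  exists ([set y | 0 < hx y - f y], above hx); first by split=> //; exists hx.
  move=> [y h] /= [hfy [_ hxh]]; rewrite subr_gt0 in hfy.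
  exact: lt_le_trans hfy (hxh y).
by exists k => // x; apply: (fk k) => //; split.
Qed.

Lemma compact_min_closed_lt (P : set (T -> R)) (f : T -> R) :
  continuous f -> (forall h, P h -> continuous h) ->
  (forall h k, P h -> P k -> P (h \min k)) -> P !=set0 ->
  (forall x, exists2 h, P h & h x < f x) ->
  exists2 h, P h & forall x, h x < f x.
Proof.
move=> cf cP Pmin [h0 Ph0] ptwise.
have oppK (h : T -> R) : (fun x => - (- h x)) = h.
  by apply/funext => x; rewrite opprK.
have [h Ph fh] : exists2 h, P (fun x => - h x) & forall x, - f x < h x.
  apply: (@compact_max_closed_gt [set h | P (fun x => - h x)]).
  - by move=> x; apply/continuousN/cf.
  - move=> h Ph; rewrite -[h]oppK => x.
    exact: (@continuousN _ R^o _ _ x (cP _ Ph x)).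
  - move=> h k Ph Pk /=.
    have -> : (fun x => - (h \max k) x) = (fun x => - h x) \min (fun x => - k x).
      by apply/funext => x /=; rewrite oppr_max.
    exact: Pmin.
  - by exists (fun x => - h0 x); rewrite /= oppK.
  - move=> x; have [h Ph hf] := ptwise x.
    by exists (fun x => - h x); rewrite /= ?oppK ?ltrN2.
by exists (fun x => - h x) => // x; rewrite -ltrN2 opprK.
Qed.

Lemma lattice_uniform_approx (P : set (T -> R)) (f : T -> R) :
  continuous f -> (forall h, P h -> continuous h) ->
  (forall h k, P h -> P k -> P (h \max k)) ->
  (forall h k, P h -> P k -> P (h \min k)) -> P !=set0 ->
  (forall b c, exists2 h, P h & h b = f b /\ h c = f c) ->
  forall e, 0 < e -> exists2 h, P h & forall x, `|f x - h x| < e.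
Proof.
move=> cf cP Pmax Pmin P0 interp e e0.
pose above := [set h | P h /\ forall x, f x - e < h x].
have cfe (s : R) : continuous (fun x => f x + s) by exact: continuous_addr.
have above0 : above !=set0.
  have [h Ph fh] : exists2 h, P h & forall x, f x - e < h x.
    apply: (compact_max_closed_gt (cfe (- e)) cP Pmax P0) => x.
    by have [h Ph [hx _]] := interp x x; exists h; rewrite // hx ltrBlDr ltrDl.
  by exists h.
have below_at c : exists2 h, above h & h c < f c + e.
  have [h [Ph hc] fh] :
      exists2 h, P h /\ h c <= f c & forall x, f x - e < h x.
    apply: (compact_max_closed_gt (cfe (- e))).
    - by move=> h [Ph _]; exact: cP.
    - move=> h k [Ph hc] [Pk kc].
      by split; [exact: Pmax|rewrite /= ge_max hc kc].
    - by have [h Ph [hc _]] := interp c c; exists h; split; rewrite ?hc.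
    - move=> x; have [h Ph [hc hx]] := interp c x.
      by exists h; rewrite ?hc ?hx // ltrBlDr ltrDl.
  by exists h; [split|rewrite (le_lt_trans hc) // ltrDl].
have [h [Ph fh] hf] : exists2 h, above h & forall x, h x < f x + e.
  apply: (compact_min_closed_lt (cfe e) _ _ above0 below_at).
  - by move=> h [Ph _]; exact: cP.
  - move=> h k [Ph fh] [Pk fk].
    by split; [exact: Pmin|move=> x; rewrite lt_min fh fk].
by exists h => // x; rewrite ltr_distlC fh hf.
Qed.

End LatticeApproximation.

Section PositiveFunctional.
Variables (R : realType) (T : topologicalType) (L : (T -> R) -> R).
Hypothesis hL : positive_radon L.

Lemma radonB (f g : T -> R) : continuous f -> continuous g ->
  L (fun x => f x - g x) = L f - L g.
Proof.
case: hL => LD LZ _ cf cg.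
have -> : (fun x => f x - g x) = (fun x => f x + -1 * g x).
  by apply/funext => x; rewrite mulN1r.
by rewrite LD ?LZ ?mulN1r //; exact: continuous_scale.
Qed.

Lemma radon_addr (f : T -> R) (a : R) : continuous f ->
  L (fun x => f x + a) = L f + a * L (fun=> 1).
Proof.
case: hL => LD LZ _ cf.
have -> : (fun x => f x + a) = (fun x => f x + a * (fun=> 1) x).
  by apply/funext => x; rewrite mulr1.
by rewrite LD // ?LZ //; exact: cst_continuous.
Qed.

Lemma radon_le (f g : T -> R) : continuous f -> continuous g ->
  (forall x, f x <= g x) -> L f <= L g.
Proof.
case: (hL) => _ _ Lge0 cf cg fg.
rewrite -subr_ge0 -radonB //; apply: Lge0 => [|x]; last by rewrite subr_ge0.
exact: continuous_sub.
Qed.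

Lemma radon_dist_le (f h : T -> R) (e : R) : continuous f -> continuous h ->
  (forall x, `|f x - h x| <= e) -> `|L f - L h| <= e * L (fun=> 1).
Proof.
move=> cf ch fh; rewrite ler_distlC.
have [lo hi] : (forall x, f x <= h x + e) /\ (forall x, h x <= f x + e).
  by split=> x; have := fh x; rewrite ler_distlC => /andP[]; rewrite lerBlDr.
rewrite lerBlDr -!radon_addr //.
by rewrite !radon_le //; exact: continuous_addr.
Qed.

End PositiveFunctional.

Lemma radon_eq_of_uniform_approx (R : realType) (T : topologicalType)
    (mu nu : (T -> R) -> R) (f : T -> R) :
  positive_radon mu -> positive_radon nu -> continuous f ->
  (forall e, 0 < e ->
     exists2 h, continuous h /\ mu h = nu h & forall x, `|f x - h x| < e) ->
  mu f = nu f.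
Proof.
move=> hmu hnu cf approx.
have [_ _ mu_ge0] := hmu; have [_ _ nu_ge0] := hnu.
pose K := mu (fun=> 1) + nu (fun=> 1).
have K_ge0 : 0 <= K.
  by rewrite addr_ge0 // ?mu_ge0 ?nu_ge0 //; exact: cst_continuous.
apply/eqP; rewrite -subr_eq0 -normr_le0; apply/ler_addgt0Pr => eps eps0.
have e0 : 0 < eps / (K + 1) by rewrite divr_gt0 // ltr_wpDl.
have [h [ch mu_nu_h] fh] := approx _ e0.
have fhe x : `|f x - h x| <= eps / (K + 1) by exact/ltW.
have := radon_dist_le hmu cf ch fhe; have := radon_dist_le hnu cf ch fhe.
rewrite mu_nu_h add0r distrC => nu_dist mu_dist.
apply: le_trans (ler_distD (nu h) (mu f) (nu f)) _.
apply: le_trans (lerD mu_dist nu_dist) _; rewrite -mulrDr -/K.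
by rewrite mulrAC ler_pdivrMr ?ltr_wpDl // ler_pM2l // lerDl.
Qed.

Section ConeDifferences.
Variables (R : realType) (T : Type) (G : set (T -> R)).
Hypothesis G_add : forall g k, G g -> G k -> G (fun x => g x + k x).
Hypothesis G_scale : forall a g, 0 <= a -> G g -> G (fun x => a * g x).
Hypothesis G_cst : forall a, 0 <= a -> G (fun=> a).
Hypothesis G_max : forall g k, G g -> G k -> G (g \max k).

Definition cone_diffs : set (T -> R) :=
  [set h | exists g k, [/\ G g, G k & h = (fun x => g x - k x)]].

Lemma cone_diffs_G g : G g -> cone_diffs g.
Proof.
move=> Gg; exists g, (fun=> 0); split; [by []|exact: G_cst|].
by apply/funext => x; rewrite subr0.
Qed.

Lemma cone_diffs_cst a : cone_diffs (fun=> a).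
Proof.
have [a_ge0|a_lt0] := leP 0 a; first by apply: cone_diffs_G; exact: G_cst.
exists (fun=> 0), (fun=> - a); split; first exact: G_cst.
  by apply: G_cst; rewrite oppr_ge0 ltW.
by apply/funext => x; rewrite sub0r opprK.
Qed.

Lemma cone_diffs_add h1 h2 : cone_diffs h1 -> cone_diffs h2 ->
  cone_diffs (fun x => h1 x + h2 x).
Proof.
move=> [g1 [k1 [G1 K1 ->]]] [g2 [k2 [G2 K2 ->]]].
exists (fun x => g1 x + g2 x), (fun x => k1 x + k2 x); split; try exact: G_add.
by apply/funext => x; ring.
Qed.

Lemma cone_diffs_scale a h : cone_diffs h -> cone_diffs (fun x => a * h x).
Proof.
move=> [g [k [Gg Gk ->]]]; have [a_ge0|a_lt0] := leP 0 a.
  exists (fun x => a * g x), (fun x => a * k x); split; try exact: G_scale.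
  by apply/funext => x; ring.
have Na_ge0 : 0 <= - a by rewrite oppr_ge0 ltW.
exists (fun x => - a * k x), (fun x => - a * g x); split; try exact: G_scale.
by apply/funext => x; ring.
Qed.

(* max (g1 - k1) (g2 - k2) = max (g1 + k2) (g2 + k1) - (k1 + k2) *)
Lemma cone_diffs_max h1 h2 : cone_diffs h1 -> cone_diffs h2 ->
  cone_diffs (h1 \max h2).
Proof.
move=> [g1 [k1 [G1 K1 ->]]] [g2 [k2 [G2 K2 ->]]].
exists ((fun x => g1 x + k2 x) \max (fun x => g2 x + k1 x)),
  (fun x => k1 x + k2 x).
split; [by apply: G_max; exact: G_add|exact: G_add|].
by apply/funext => x /=; rewrite addr_maxl; congr Order.max; ring.
Qed.

Lemma cone_diffs_min h1 h2 : cone_diffs h1 -> cone_diffs h2 ->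
  cone_diffs (h1 \min h2).
Proof.
move=> D1 D2.
have -> : h1 \min h2 =
    (fun x => -1 * ((fun y => -1 * h1 y) \max (fun y => -1 * h2 y)) x).
  by apply/funext => x /=; rewrite !mulN1r oppr_max !opprK.
by apply: cone_diffs_scale; apply: cone_diffs_max; exact: cone_diffs_scale.
Qed.

Lemma cone_diffs_interpolate g b c y z : G g -> g b != g c ->
  exists2 h, cone_diffs h & h b = y /\ h c = z.
Proof.
move=> Gg gbc; pose s := (z - y) / (g c - g b).
exists (fun x => s * g x + (y - s * g b)).
  apply: cone_diffs_add; last exact: cone_diffs_cst.
  by apply: cone_diffs_scale; exact: cone_diffs_G.
have gcb : g c - g b != 0 by rewrite subr_eq0 eq_sym.
by split; [ring|rewrite /s; field].
Qed.

End ConeDifferences.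

Lemma cone_diffs_continuous (R : realType) (T : topologicalType)
    (G : set (T -> R)) :
  (forall g, G g -> continuous g) -> forall h, cone_diffs G h -> continuous h.
Proof. by move=> cG _ [g [k [Gg Gk ->]]]; apply: continuous_sub; exact: cG. Qed.

Lemma radon_eq_cone_diffs (R : realType) (T : topologicalType)
    (G : set (T -> R)) (mu nu : (T -> R) -> R) :
  positive_radon mu -> positive_radon nu -> (forall g, G g -> continuous g) ->
  (forall g, G g -> mu g = nu g) -> forall h, cone_diffs G h -> mu h = nu h.
Proof.
move=> hmu hnu cG eqG _ [g [k [Gg Gk ->]]].
by rewrite !radonB ?eqG //; exact: cG.
Qed.

Section MetricCone.
Variables (R : realType) (M : metricType R) (B : topologicalType)
  (i : Mtilde M -> B).
Local Notation G := (Gset i).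

Lemma Gset_continuous g : G g -> continuous g.
Proof. by case. Qed.

Lemma Gset_add g k : G g -> G k -> G (fun x => g x + k x).
Proof.
move=> [cg Hg] [ck Hk]; split; first exact: continuous_add.
move=> p q r pq qr rp; rewrite !mulrDr addrACA.
by apply: lerD; [exact: Hg|exact: Hk].
Qed.

Lemma Gset_scale a g : 0 <= a -> G g -> G (fun x => a * g x).
Proof.
move=> a_ge0 [cg Hg]; split; first exact: continuous_scale.
move=> p q r pq qr rp; rewrite ![mdist _ _ * (a * _)]mulrCA -mulrDr.
by rewrite ler_wpM2l // Hg.
Qed.

Lemma Gset_cst a : 0 <= a -> G (fun=> a).
Proof.
move=> a_ge0; split; first exact: cst_continuous.
move=> p q r pq qr rp; rewrite -mulrDl ler_wpM2r // pq -rp -qr.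
exact: metric_triangle.
Qed.

Lemma Gset_max g k : G g -> G k -> G (g \max k).
Proof.
move=> [cg Hg] [ck Hk]; split; first exact: max_fun_continuous.
move=> p q r pq qr rp /=; rewrite maxr_pMr ?mdist_ge0 // ge_max.
apply/andP; split; [apply: le_trans (Hg p q r pq qr rp) _
                   |apply: le_trans (Hk p q r pq qr rp) _];
  by apply: lerD; apply: ler_wpM2l; rewrite ?mdist_ge0 // le_max lexx ?orbT.
Qed.

Lemma Gset_factor g : G g ->
  exists2 phi : MtildeG i -> R, continuous phi & phi \o qmap i = g.
Proof.
move=> Gg; have Grel_eq b c : Grel i b c -> g b = g c by move/asboolP; apply.
exists (g \o repr).
  apply: repr_comp_continuous; first exact: Gset_continuous.
  by move=> b c /eqP bc; apply/eqP/Grel_eq/eqmodP.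
by apply/funext => x /=; apply/Grel_eq/eqmodP; rewrite reprK.
Qed.

Lemma qmap_comp_interpolate (phi : MtildeG i -> R) b c :
  exists2 h, cone_diffs G h & h b = phi (qmap i b) /\ h c = phi (qmap i c).
Proof.
have [bc|nbc] := boolP (Grel i b c).
  exists (fun=> phi (qmap i b)); first exact: cone_diffs_cst Gset_cst _.
  by split=> //; congr phi; apply/eqmodP.
have [g Gg gbc] : exists2 g, G g & g b != g c.
  by move/asboolPn: nbc => /existsNP [g /not_implyP [Gg /eqP gbc]]; exists g.
exact: cone_diffs_interpolate Gset_add Gset_scale Gset_cst _ _ _ _ _ Gg gbc.
Qed.

End MetricCone.

Theorem proposition3p3 (R : realType) (M : metricType R) (x0 : M)
  (Mcomplete : complete_space M)
  (three_points : exists x y z : M, [/\ x <> y, y <> z & x <> z])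
  (B : topologicalType) (i : Mtilde M -> B)
  (hB : is_stone_cech i)
  (mu nu : (B -> R) -> R)
  (hmu : positive_radon mu) (hnu : positive_radon nu) :
  (Gle i mu nu /\ Gle i nu mu) <->
  radon_eq (qpush i mu) (qpush i nu).
Proof.
have [[compactB _] _ _ _ _] := hB.
have cG := @Gset_continuous _ _ _ i.
have cD := cone_diffs_continuous cG.
split=> [[le_mu_nu le_nu_mu] phi cphi | eq_q].
  have eqG g : Gset i g -> mu g = nu g.
    by move=> Gg; apply/le_anti; rewrite le_mu_nu ?le_nu_mu.
  have eqD := radon_eq_cone_diffs hmu hnu cG eqG.
  have cF : continuous (phi \o qmap i) by exact/quotient_continuous.
  apply: (radon_eq_of_uniform_approx hmu hnu cF) => e e0.
  have [h Dh Fh] := lattice_uniform_approx compactB cF cD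
    (cone_diffs_max (@Gset_add _ _ _ i) (@Gset_max _ _ _ i))
    (cone_diffs_min (@Gset_add _ _ _ i) (@Gset_scale _ _ _ i)
       (@Gset_max _ _ _ i))
    (ex_intro _ _ (cone_diffs_cst (@Gset_cst _ _ _ i) 0))
    (@qmap_comp_interpolate _ _ _ i phi) e0.
  by exists h => //; split; [exact: cD|exact: eqD].
have eqG g : Gset i g -> mu g = nu g.
  by case/Gset_factor => phi cphi <-; have := eq_q phi cphi; rewrite /qpush.
by split=> g /eqG ->.
Qed.
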